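(* If $M_C$ is a semi-positive or semi-negative mixed cycle of arbitrary order $n\ge3$, or a negative mixed cycle of even order, then $\rho(M_C)<2$.
   Context: A mixed graph is obtained from a finite simple graph by orienting some of its edges. With $\omega=\frac{1+\mathbf{i}\sqrt3}{2}$, the matrix $N=(n_{st})$ has entry $\omega$ for an arc from $u_s$ to $u_t$, $\bar\omega$ for an arc from $u_t$ to $u_s$, $1$ for an undirected edge, $0$ otherwise; $\rho$ is the maximum absolute value of an eigenvalue of $N$. A mixed cycle has underlying graph a cycle $v_1\cdots v_nv_1$ and weight $n_{12}\cdots n_{n1}$; it is negative if the weight is $-1$, semi-positive if it is $\omega$ or $\bar\omega$, semi-negative if it is $-\omega$ or $-\bar\omega$. *)

From HB Require Import structures.
From mathcomp Require Import all_boot all_order all_algebra all_field.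
Set Implicit Arguments. Unset Strict Implicit. Unset Printing Implicit Defensive.
Import Order.TTheory GRing.Theory Num.Theory.
Local Open Scope ring_scope.

Definition omega : algC := (1 + 'i * sqrtC 3) / 2.

(* A mixed graph on the finite vertex type T: underlying simple graph with
   edge relation E (symmetric, irreflexive); A u v means the edge uv is
   oriented as an arc from u to v. *)
Definition mixed_graph (T : finType) (E A : rel T) : Prop :=
  [/\ symmetric E, irreflexive E,
      (forall u v, A u v -> E u v) &
      (forall u v, A u v -> ~~ A v u)].

Definition nentry (T : finType) (E A : rel T) (u v : T) : algC :=
  if A u v then omega
  else if A v u then omega^*
  else if E u v then 1 else 0.

Definition Nmx (T : finType) (E A : rel T) : 'M[algC]_#|T| :=
  \matrix_(s, t) nentry E A (enum_val s) (enum_val t).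

Definition spectral_radius (n : nat) (M : 'M[algC]_n) (r : algC) : Prop :=
  (exists2 a, eigenvalue M a & `|a| = r) /\
  (forall a, eigenvalue M a -> `|a| <= r).

Definition mixed_cycle (T : finType) (E : rel T) (f : 'I_#|T| -> T) : Prop :=
  injective f /\
  forall u v, E u v =
    [exists i, ((u == f i) && (v == f (ordS i)))
               || ((v == f i) && (u == f (ordS i)))].

Definition cycle_weight (T : finType) (E A : rel T) (f : 'I_#|T| -> T) : algC :=
  \prod_(i < #|T|) nentry E A (f i) (f (ordS i)).

Definition semi_positive (w : algC) := w = omega \/ w = omega^*.
Definition semi_negative (w : algC) := w = - omega \/ w = - omega^*.
Definition negative (w : algC) := w = -1.

From HB Require Import structures.
From mathcomp Require Import all_boot all_order all_algebra all_field.
From mathcomp Require Import ring zify.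
Set Implicit Arguments. Unset Strict Implicit. Unset Printing Implicit Defensive.
Import Order.TTheory GRing.Theory Num.Theory.
Local Open Scope ring_scope.

(* Let a be an eigenvalue with |a| >= 2 and read an eigenvector along the
   cycle, u_i = v_(f i), m_i = n_(f i, f (i+1)), so that
   a u_i = conj(m_i) u_(i+1) + m_(i-1) u_(i-1) with |m_i| = 1.  At a
   coordinate of maximal modulus M the right-hand side has modulus at most
   2M <= |a| M, so the triangle inequality is an equality: both terms are
   equal and the next coordinate again has modulus M.  Going around the cycle,
   conj(m_i) u_(i+1) = (a/2) u_i for every i; hence c = a/2 satisfies c^2 = 1
   and the cycle weight is c^n = +-1.  This excludes the weights +-omega,
   +-conj(omega), which are not real, and -1 when n is even. *)

Lemma conj_omega : omega^* = (1 - 'i * sqrtC 3) / 2.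
Proof.
have sqrt3_real : (sqrtC 3 : algC) \is Num.real.
  by apply: ger0_real; rewrite sqrtC_ge0 ler0n.
by rewrite /omega rmorphM /= conjC_rect ?rpred1 // fmorphV /= conjC_nat.
Qed.

Lemma omega_mul_conj : omega * omega^* = 1.
Proof.
have two_neq0 : (2 : algC) != 0 by rewrite pnatr_eq0.
rewrite conj_omega /omega.
have -> : (1 + 'i * sqrtC 3) / 2 * ((1 - 'i * sqrtC 3) / 2)
          = (1 - 'i ^+ 2 * sqrtC 3 ^+ 2) / 2 ^+ 2 :> algC by field.
by rewrite sqrCi sqrtCK; field.
Qed.

Lemma normC_omega : `|omega| = 1.
Proof.
by apply/eqP; rewrite -(sqrp_eq1 (normr_ge0 _)) normCK omega_mul_conj.
Qed.

Lemma omega_not_real : omega \isn't Num.real.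
Proof.
have two_neq0 : (2 : algC) != 0 by rewrite pnatr_eq0.
apply/negP; rewrite CrealE conj_omega /omega => /eqP.
move/(congr1 ( *%R^~ 2)); rewrite !divfK // => /addrI /eqP.
by rewrite eqNr mulf_eq0 (negbTE (neq0Ci _)) sqrtC_eq0 pnatr_eq0.
Qed.

Lemma semi_weight_not_real w :
  semi_positive w \/ semi_negative w -> w \isn't Num.real.
Proof.
have omegaC_not_real : omega^* \isn't Num.real.
  by rewrite CrealE conjCK eq_sym -CrealE omega_not_real.
by case=> [[]|[]] ->; rewrite ?rpredN ?omega_not_real.
Qed.

Lemma sqr1_real (R : numDomainType) (c : R) : c ^+ 2 = 1 -> c \is Num.real.
Proof. by move/eqP; rewrite sqrf_eq1 => /orP[] /eqP ->; rewrite ?rpredN rpred1. Qed.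

Lemma expr_even_sqr1 (R : pzSemiRingType) (c : R) k :
  c ^+ 2 = 1 -> ~~ odd k -> c ^+ k = 1.
Proof.
move=> c_sqr1 /negbTE k_even.
by rewrite -(odd_double_half k) k_even -mul2n exprM c_sqr1 expr1n.
Qed.

Section MixedGraph.

Variables (T : finType) (E A : rel T).
Hypothesis mixed_EA : mixed_graph E A.

Lemma nentryC u v : nentry E A v u = (nentry E A u v)^*.
Proof.
case: mixed_EA => E_sym _ _ A_asym; rewrite /nentry.
have [uv|not_uv] := boolP (A u v); first by rewrite (negbTE (A_asym _ _ uv)).
case: (A v u); first by rewrite conjCK.
by rewrite E_sym; case: (E u v); rewrite ?conjC1 ?conjC0.
Qed.

Lemma nentry_eq0 u v : ~~ E u v -> nentry E A u v = 0.
Proof.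
case: mixed_EA => E_sym _ A_E _ not_uv; rewrite /nentry.
have [/A_E uv|_] := boolP (A u v); first by rewrite uv in not_uv.
have [/A_E vu|_] := boolP (A v u); first by rewrite E_sym vu in not_uv.
by rewrite (negbTE not_uv).
Qed.

Lemma norm_nentry u v : E u v -> `|nentry E A u v| = 1.
Proof.
move=> uv; rewrite /nentry.
case: (A u v); first exact: normC_omega.
by case: (A v u); rewrite ?norm_conjC ?normC_omega // uv normr1.
Qed.

End MixedGraph.

Lemma mixed_cycle_adj (T : finType) (E : rel T) f : mixed_cycle E f ->
  forall i j, E (f i) (f j) = (j == ordS i) || (i == ordS j).
Proof.
case=> f_inj E_cycle i j; rewrite E_cycle.
apply/existsP/orP => [[k /orP[]/andP[/eqP/f_inj-> /eqP/f_inj->]]|]; [by left|by right|].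
by case=> /eqP->; [exists i|exists j]; rewrite !eqxx ?orbT.
Qed.

Lemma iter_ordS n (i : 'I_n) k : iter k (@ordS n) i = ((i + k) %% n)%N :> nat.
Proof.
elim: k => [|k IHk] /=; first by rewrite addn0 modn_small.
by rewrite IHk -addn1 modnDml addn1 addnS.
Qed.

Lemma ordS_ind n (P : pred 'I_n) i0 :
  P i0 -> (forall i, P i -> P (ordS i)) -> forall j, P j.
Proof.
move=> P_i0 P_ordS j.
have P_iter k : P (iter k (@ordS n) i0) by elim: k => //= k; apply: P_ordS.
suff -> : j = iter (j + (n - i0)) (@ordS n) i0 by [].
apply: val_inj => /=; rewrite iter_ordS addnCA subnKC; last exact: ltnW.
by rewrite modnDr modn_small.
Qed.

Lemma ord_pred_neq_ordS n (i : 'I_n) : (3 <= n)%N -> ord_pred i != ordS i.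
Proof.
move=> n_ge3; apply/eqP => pred_eq_succ.
have succ2 : iter 2 (@ordS n) i = i by rewrite /= -pred_eq_succ ord_predK.
have := iter_ordS i 2; rewrite succ2.
have i_lt_n := ltn_ord i.
have [i2_lt_n|n_le_i2] := ltnP (i + 2) n; first by rewrite modn_small //; lia.
have -> : (i + 2 = (i + 2 - n) + n)%N by lia.
by rewrite modnDr modn_small; lia.
Qed.

Lemma normC_add_max_eq (C : numClosedFieldType) (x y M : C) :
  `|x| <= M -> `|y| <= M -> 2 * M <= `|x + y| -> x = y.
Proof.
move=> x_le y_le sum_ge.
have M_ge0 : 0 <= M := le_trans (normr_ge0 x) x_le.
have parallelogram : `|x - y| ^+ 2 = 2 * `|x| ^+ 2 + 2 * `|y| ^+ 2 - `|x + y| ^+ 2.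
  by rewrite !normCK !rmorphD rmorphN /=; ring.
have sqr_2M : (2 * M) ^+ 2 = 2 * (M ^+ 2 + M ^+ 2) by ring.
have : `|x - y| ^+ 2 <= 0.
  rewrite parallelogram subr_le0 (le_trans _ (lerXn2r 2 _ _ sum_ge)) ?nnegrE //.
  - by rewrite sqr_2M -mulrDr ler_pM2l ?ltr0n // lerD // lerXn2r ?nnegrE.
  - by rewrite mulr_ge0 ?ler0n.
move=> sqr_le0; apply/eqP; rewrite -subr_eq0 -normr_eq0 -sqrf_eq0.
by rewrite eq_le sqr_le0 exprn_ge0.
Qed.

Section WeightedCycle.

Variables (n : nat) (m u : 'I_n -> algC) (a : algC).
Hypothesis norm_m : forall i, `|m i| = 1.
Hypothesis eigen_u : forall i,
  a * u i = u (ordS i) * (m i)^* + u (ord_pred i) * m (ord_pred i).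
Hypothesis a_ge2 : 2 <= `|a|.

Section AtMaximum.

Variable i0 : 'I_n.
Hypothesis u_i0_max : forall i, `|u i| <= `|u i0|.
Hypothesis u_i0_neq0 : u i0 != 0.

Let M := `|u i0|.
Let c := a / 2.

Let M_gt0 : 0 < M. Proof. by rewrite normr_gt0. Qed.

Lemma neighbours_eq_at_max i : `|u i| = M ->
  u (ordS i) * (m i)^* = u (ord_pred i) * m (ord_pred i).
Proof.
move=> ui_max; apply: (@normC_add_max_eq _ _ _ M).
- by rewrite normrM norm_conjC norm_m mulr1.
- by rewrite normrM norm_m mulr1.
by rewrite -eigen_u normrM ui_max ler_pM2r.
Qed.

Lemma norm_succ_at_max i : `|u i| = M -> `|u (ordS i)| = M.
Proof.
move=> ui_max; apply/eqP; rewrite eq_le u_i0_max /= -(ler_pM2l (ltr0n _ 2)).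
have : 2 * M <= `|a * u i| by rewrite normrM ui_max ler_pM2r.
rewrite eigen_u -(neighbours_eq_at_max ui_max) -mulr2n normrMn normrM.
by rewrite norm_conjC norm_m mulr1 => /le_trans->; rewrite ?mulr_natl.
Qed.

Lemma norm_u_const i : `|u i| = M.
Proof.
apply/eqP; move: i; apply: (@ordS_ind _ (fun i => `|u i| == M) i0) => //= i.
by move=> /eqP /norm_succ_at_max ->.
Qed.

Lemma u_neq0 i : u i != 0.
Proof. by rewrite -normr_eq0 norm_u_const gt_eqF. Qed.

Lemma half_eigen_succ i : u (ordS i) * (m i)^* = c * u i.
Proof.
have two_neq0 : (2 : algC) != 0 by rewrite pnatr_eq0.
rewrite /c mulrAC eigen_u -(neighbours_eq_at_max (norm_u_const i)).
by field.
Qed.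

Lemma half_eigen_pred i : u i * m i = c * u (ordS i).
Proof.
by rewrite -half_eigen_succ (neighbours_eq_at_max (norm_u_const _)) ordSK.
Qed.

Lemma half_eigen_sqr : c ^+ 2 = 1.
Proof.
have m_unit : m i0 * (m i0)^* = 1 by rewrite -normCK norm_m expr1n.
apply: (mulIf (u_neq0 (ordS i0))); rewrite mul1r.
rewrite expr2 -mulrA -half_eigen_pred mulrA -half_eigen_succ.
by rewrite -mulrA [_^* * _]mulrC m_unit mulr1.
Qed.

Lemma prod_weights_half_eigen : \prod_i m i = c ^+ n.
Proof.
have u_prod_neq0 : \prod_i u i != 0 by apply/prodf_neq0 => i _; apply: u_neq0.
apply: (mulIf u_prod_neq0); rewrite mulrC -big_split /=.
rewrite (eq_bigr _ (fun i _ => half_eigen_pred i)) big_split /= prodr_const card_ord.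
by rewrite [in RHS](reindex_inj (@ordS_inj n)).
Qed.

End AtMaximum.

Hypothesis u_nonzero : exists i, u i != 0.

Lemma weighted_cycle_product : exists2 c : algC, c ^+ 2 = 1 & \prod_i m i = c ^+ n.
Proof.
have [i1 u_i1_neq0] := u_nonzero.
have [i0 _ u_i0_max] := @comparable_arg_maxP _ _ _ i1 xpredT (fun i => `|u i|) isT
  (fun i j _ _ => real_comparable (normr_real _) (normr_real _)).
have {}u_i0_max i : `|u i| <= `|u i0| := u_i0_max i isT.
have u_i0_neq0 : u i0 != 0.
  by rewrite -normr_gt0 (lt_le_trans _ (u_i0_max i1)) ?normr_gt0.
exists (a / 2).
- exact: half_eigen_sqr u_i0_max u_i0_neq0.
- exact: prod_weights_half_eigen u_i0_max u_i0_neq0.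
Qed.

End WeightedCycle.

Section MixedCycle.

Variables (T : finType) (E A : rel T) (f : 'I_#|T| -> T).
Hypotheses (mixed_EA : mixed_graph E A) (cycle_f : mixed_cycle E f).
Variables (v : 'rV[algC]_#|T|) (a : algC).

Let m i := nentry E A (f i) (f (ordS i)).
Let u i : algC := v 0 (enum_rank (f i)).

Lemma norm_cycle_nentry i : `|m i| = 1.
Proof. by rewrite norm_nentry // (mixed_cycle_adj cycle_f) eqxx. Qed.

Lemma cycle_eigen_equation : (3 <= #|T|)%N -> v *m Nmx E A = a *: v ->
  forall i, a * u i = u (ordS i) * (m i)^* + u (ord_pred i) * m (ord_pred i).
Proof.
move=> n_ge3 /rowP eigen_v i; have := eigen_v (enum_rank (f i)); rewrite !mxE => <-.
have rank_f_inj : injective (enum_rank \o f).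
  by move=> j k /enum_rank_inj; apply: cycle_f.1.
rewrite (reindex_inj rank_f_inj) /= (bigD1 (ordS i)) //= (bigD1 (ord_pred i)) /=;
  last by rewrite ord_pred_neq_ordS.
rewrite big1 ?addr0 => [|j /andP[j_neq_succ j_neq_pred]]; last first.
  rewrite mxE !enum_rankK nentry_eq0 ?mulr0 // (mixed_cycle_adj cycle_f) negb_or.
  by rewrite j_neq_succ andbT; apply: (contraNneq _ j_neq_pred) => ->; rewrite ordSK.
by rewrite !mxE !enum_rankK (nentryC mixed_EA) /m ord_predK.
Qed.

End MixedCycle.

Lemma cycle_coords_nonzero (T : finType) (f : 'I_#|T| -> T) (v : 'rV[algC]_#|T|) :
  injective f -> v != 0 -> exists i, v 0 (enum_rank (f i)) != 0.
Proof.
move=> f_inj v_neq0; have [t v_t_neq0|v_eq0] := pickP (fun t => v 0 t != 0); last first.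
  by case/eqP: v_neq0; apply/rowP => t; rewrite mxE; apply/eqP/negbFE/v_eq0.
have /codomP[i f_i] := inj_card_onto f_inj (eq_leq (esym (card_ord _))) (enum_val t).
by exists i; rewrite -f_i enum_valK.
Qed.

Theorem lemma6p11 (T : finType) (E A : rel T) (f : 'I_#|T| -> T) :
  (3 <= #|T|)%N ->
  mixed_graph E A ->
  mixed_cycle E f ->
  [\/ semi_positive (cycle_weight E A f),
      semi_negative (cycle_weight E A f)
    | negative (cycle_weight E A f) /\ ~~ odd #|T| ] ->
  forall r : algC, spectral_radius (Nmx E A) r -> r < 2.
Proof.
move=> n_ge3 mixed_EA cycle_f weight_cases r [[a /eigenvalueP[v eigen_v v_neq0] <-] _].
rewrite real_ltNge ?normr_real ?realn //; apply/negP => a_ge2.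
have [c c_sqr1 weight_c] : exists2 c : algC, c ^+ 2 = 1 & cycle_weight E A f = c ^+ #|T|.
  apply: (weighted_cycle_product (u := fun i => v 0 (enum_rank (f i))) (a := a)) => //.
  - exact: norm_cycle_nentry.
  - exact: cycle_eigen_equation.
  - exact: cycle_coords_nonzero cycle_f.1 v_neq0.
have weight_real : cycle_weight E A f \is Num.real by rewrite weight_c rpredX ?sqr1_real.
case: weight_cases => [w_semi|w_semi|[w_eqN1 n_even]].
- by move: weight_real; apply/negP/semi_weight_not_real; left.
- by move: weight_real; apply/negP/semi_weight_not_real; right.
- move: w_eqN1; rewrite /negative weight_c expr_even_sqr1 //.
  by move/eqP; rewrite eq_sym eqNr oner_eq0.
Qed.
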